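(* Let $\mathbb{F}_q$ be the finite field with $q$ elements and let $f(T)=T^2+aT+b\in\mathbb{F}_q[T]$ be irreducible. Then for every $\gamma\in\mathbb{F}_q^{*}$, the cyclotomic function field $F(\Lambda_M)$ with modulus $M=f$ is $\mathbb{F}_q$-isomorphic to the function field $\mathbb{F}_q(v,y)$ defined over $\mathbb{F}_q$ by $$y^{q-1}=-\frac{\gamma v^2+av+(b/\gamma)}{v^q-v}.$$
   Context: Let $x$ be transcendental over $\mathbb{F}_q$, $R=\mathbb{F}_q[x]$, $F=\mathbb{F}_q(x)$, and $\overline{F}$ a fixed algebraic closure of $F$. Make $\overline{F}$ an $R$-module via $z^{g(x)}=g(\varphi)(z)$ for $g\in R$, where $\varphi\in\operatorname{End}_{\mathbb{F}_q}(\overline{F})$ is $\varphi(z)=z^q+xz$ (so $z^{\sum a_ix^i}=\sum a_i\varphi^i(z)$). For nonzero $M\in R$, $\Lambda_M=\{z\in\overline{F}: z^M=0\}$, and the cyclotomic function field with modulus $M$ is $F(\Lambda_M)$, the subfield of $\overline{F}$ generated over $F$ by $\Lambda_M$ (here $M$ is viewed as a polynomial in $x$). *)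

From HB Require Import structures.
From mathcomp Require Import all_boot all_order all_algebra all_field.
Set Implicit Arguments. Unset Strict Implicit. Unset Printing Implicit Defensive.
Import GRing.Theory.
Local Open Scope ring_scope.

Section CarlitzDefs.
Variables (k : finFieldType) (L : fieldType) (kappa : {rmorphism k -> L}).

Definition transcendental_over (x : L) : Prop :=
  forall p : {poly k}, p != 0 -> (map_poly kappa p).[x] != 0.

Definition carlitz_phi (x z : L) : L := z ^+ #|k| + x * z.

Definition carlitz_act (x : L) (g : {poly k}) (z : L) : L :=
  \sum_(i < size g) kappa g`_i * iter i (carlitz_phi x) z.

Definition carlitz_torsion (x : L) (M : {poly k}) (z : L) : Prop :=
  carlitz_act x M z = 0.

Definition subfield_closed (S : L -> Prop) : Prop :=
  [/\ S 1, (forall u w, S u -> S w -> S (u - w)),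
      (forall u w, S u -> S w -> S (u * w)) & (forall u, S u -> S u^-1)].

Definition gen_field (A : L -> Prop) : L -> Prop :=
  fun z => forall S, subfield_closed S -> (forall u, A u -> S u) -> S z.

Definition const_field (z : L) : Prop := exists c : k, z = kappa c.

Definition cyclotomic_ff (x : L) (M : {poly k}) : L -> Prop :=
  gen_field (fun z => [\/ const_field z, z = x | carlitz_torsion x M z]).

(* evaluation of a bivariate polynomial P(V,Y) in {poly {poly k}}
   (outer variable Y, inner variable V) at V = v, Y = y *)
Definition eval2 (v y : L) (P : {poly {poly k}}) : L :=
  (map_poly (fun c : {poly k} => (map_poly kappa c).[v]) P).[y].

End CarlitzDefs.

(* G(V,Y) = Y^(q-1) (V^q - V) + (gamma V^2 + a V + b/gamma),
   the cleared form of y^(q-1) = -(gamma v^2 + a v + b/gamma)/(v^q - v). *)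
Definition defining_poly (k : finFieldType) (a b gamma : k) : {poly {poly k}} :=
  'X^(#|k|.-1) * (('X^#|k| - 'X) : {poly k})%:P
  + (gamma *: 'X^2 + a *: 'X + (b / gamma)%:P : {poly k})%:P.

From Pilot Require Import Defs.
From HB Require Import structures.
From mathcomp Require Import all_boot all_order all_algebra all_field.
From mathcomp Require Import cyclic ring.
Set Implicit Arguments. Unset Strict Implicit. Unset Printing Implicit Defensive.
Import GRing.Theory.
Local Open Scope ring_scope.

(* Let lam be a nonzero root of z^M = phi^2 z + a phi z + b z.  Since M has no root in
   F_q, lam and phi(lam) are F_q-independent, hence span all q^2 roots, and
   F(Lambda_M) = F_q(x, lam).  Then u = lam^(q-1) satisfies
   u^(q+1) + (x^q + x + a) u + M(x) = 0, which for w = u + x reads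
   x (w^q - w) = w^(q+1) + a w + b.  So x is algebraic over F_q(w), v = w / gamma is
   transcendental, F_q(x, lam) = F_q(v, lam), and (v^q - v) lam^(q-1) + p(v) = 0 with
   p(V) = gamma V^2 + a V + b / gamma.  The relations of (v, lam) are the multiples of
   G = (V^q - V) Y^(q-1) + p(V): G is Eisenstein at the prime p(V), and a norm
   argument over the (q-1)-th roots of unity of F_q shows that lam satisfies no
   relation of Y-degree < q - 1. *)

Lemma coef_comp_poly_scaleX (R : comNzRingType) (P : {poly R}) (c : R) j :
  (P \Po (c *: 'X))`_j = c ^+ j * P`_j.
Proof.
rewrite -mul_polyC.
elim/poly_ind: P j => [|P d IH] j; first by rewrite comp_poly0 !coef0 mulr0.
rewrite comp_poly_MXaddC mulrA !coefD !coefMX !coefC.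
case: j => [|j] /=; first by rewrite expr0 mul1r.
by rewrite coefMC IH !addr0 mulrAC -exprSr.
Qed.

Lemma prod_comp_prim_root (A : idomainType) n (z : A) (R : {poly A}) :
  n.-primitive_root z ->
  exists2 S : {poly A}, \prod_(i < n) (R \Po (z ^+ i *: 'X)) = S \Po 'X^n & S`_0 = R`_0 ^+ n.
Proof.
move=> z_prim; have n_gt0 := prim_order_gt0 z_prim.
set N := \prod_(i < n) _.
have N_inv : N \Po (z *: 'X) = N.
  rewrite /N (big_morph (fun P => P \Po (z *: 'X)) (fun P Q => comp_polyM P Q _) (comp_polyC 1 _)).
  under eq_bigr => i _ do rewrite -comp_polyA comp_polyZ comp_polyX scalerA -exprSr.
  rewrite -(prednK n_gt0) big_ord_recr big_ord_recl /= prednK // (prim_expr_order z_prim).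
  by rewrite expr0 scale1r mulrC; congr (_ * _); apply: eq_bigr => i _.
have N_coef j : ~~ (n %| j)%N -> N`_j = 0.
  move=> nj; have := congr1 (fun P : {poly A} => P`_j) N_inv.
  rewrite /= coef_comp_poly_scaleX => /eqP; rewrite -subr_eq0 -{2}[N`_j]mul1r -mulrBl.
  by rewrite mulf_eq0 subr_eq0 -(prim_order_dvd z_prim) (negPf nj) => /eqP.
exists (\poly_(i < size N) N`_(i * n)).
  apply/polyP => j; rewrite coef_comp_poly_Xn //; case: ifPn => [nj | /N_coef //].
  rewrite coef_poly divnK //; case: ltnP => // le_N_j.
  by rewrite nth_default // (leq_trans le_N_j) // leq_div.
have -> : R`_0 ^+ n = N`_0.
  rewrite -[RHS]horner_coef0 horner_prod.
  under eq_bigr => i _ do rewrite horner_coef0 coef_comp_poly_scaleX expr0 mul1r.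
  by rewrite prodr_const card_ord.
by rewrite coef_poly mul0n; case: ltnP => // ?; rewrite nth_default.
Qed.

Lemma size_quad (R : fieldType) (c a b : R) : c != 0 -> size (c *: 'X^2 + a *: 'X + b%:P) = 3.
Proof.
move=> c_neq0; rewrite -addrA size_polyDl size_scale ?size_polyXn //.
rewrite (leq_ltn_trans (size_polyD _ _)) // gtn_max.
by rewrite (leq_ltn_trans (size_scale_leq _ _)) ?size_polyX // (leq_ltn_trans (size_polyC_leq1 _)).
Qed.

Lemma irredp_no_root (R : fieldType) (p : {poly R}) c :
  irreducible_poly p -> (2 < size p)%N -> ~~ root p c.
Proof.
move=> p_irr p_gt2; rewrite -dvdp_XsubCl; apply/negP => /(irredp_XsubCP p_irr) [] /eqp_size.
  by rewrite size_XsubC size_poly1.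
by rewrite size_XsubC => p2; rewrite -p2 in p_gt2.
Qed.

Lemma finField_prim_root (F : finFieldType) : exists z : F, (#|F|.-1).-primitive_root z.
Proof.
pose rs := rem 0 (enum F).
have rs_uniq : uniq rs by rewrite rem_uniq // enum_uniq.
have size_rs : size rs = #|F|.-1 by rewrite size_rem ?mem_enum // -cardE.
have rs_roots : all (#|F|.-1).-unity_root rs.
  apply/allP => c; rewrite mem_rem_uniq ?enum_uniq // inE => /andP [c_neq0 _].
  rewrite unity_rootE; apply/eqP; apply: (mulfI c_neq0); rewrite -exprS mulr1.
  by rewrite prednK ?expf_card // ltnW ?finNzRing_gt1.
have := has_prim_root _ rs_roots rs_uniq; rewrite size_rs leqnn -subn1 subn_gt0 finNzRing_gt1.
by move=> /(_ isT isT) /hasP [z _ z_prim]; exists z.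
Qed.

Lemma expcard_fixed_image (k : finFieldType) (L : fieldType) (kappa : {rmorphism k -> L}) z :
  z ^+ #|k| = z -> exists c, z = kappa c.
Proof.
move=> z_fixed; have : root (map_poly kappa ('X^#|k| - 'X)) z.
  by rewrite rmorphB /= map_polyXn map_polyX rootE !hornerE z_fixed subrr.
rewrite finField_genPoly rmorph_prod /root horner_prod => /prodf_eq0 [c _].
by rewrite rmorphB /= map_polyX map_polyC hornerXsubC subr_eq0 => /eqP ->; exists c.
Qed.


Definition kummer_poly (K : fieldType) (n : nat) (D p : {poly K}) : {poly {poly K}} :=
  'X^n * D%:P + p%:P.

Section KummerRelations.

Variables (K L : fieldType) (kappa : {rmorphism K -> L}) (v y : L).
Variables (n : nat) (zeta : K) (D p : {poly K}) (s : seq K).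
Hypothesis v_transc : forall r : {poly K}, r != 0 -> (map_poly kappa r).[v] != 0.
Hypothesis zeta_prim : n.-primitive_root zeta.
Hypothesis p_irr : irreducible_poly p.
Hypothesis D_split : D = \prod_(c <- s) ('X - c%:P).
Hypothesis p_coprime_D : coprimep p D.

Local Notation evV := (horner_morph (fun c : K => mulrC v (kappa c))).
Local Notation evVY := (horner_morph (fun c : {poly K} => mulrC y (evV c))).
Local Notation G := (kummer_poly n D p).

Hypothesis kummer_root : evVY G = 0.

Let evV_eq0 r : (evV r == 0) = (r == 0).
Proof.
by apply/idP/idP => [|/eqP->]; [apply: contraLR => /v_transc | rewrite rmorph0].
Qed.

Let n_gt0 : (0 < n)%N. Proof. exact: prim_order_gt0 zeta_prim. Qed.

Let D_neq0 : D != 0. Proof. by rewrite D_split monic_neq0 ?monic_prod_XsubC. Qed.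

Let p_neq0 : p != 0. Proof. exact: irredp_neq0. Qed.

Let evD_neq0 : evV D != 0. Proof. by rewrite evV_eq0 D_neq0. Qed.

Let evVY_C c : evVY c%:P = evV c. Proof. exact: horner_morphC. Qed.

Lemma evVY_kummer_poly : evVY G = evV D * y ^+ n + evV p.
Proof.
by rewrite rmorphD rmorphM rmorphXn /= horner_morphX !horner_morphC mulrC.
Qed.

Let y_neq0 : y != 0.
Proof.
apply: contra_eq_neq kummer_root => y0.
by rewrite evVY_kummer_poly y0 expr0n gtn_eqF ?n_gt0 // mulr0 add0r evV_eq0 p_neq0.
Qed.

Lemma dvdp_coef0_of_eval_ratio (S : {poly {poly K}}) :
  (map_poly evV S).[- evV p / evV D] = 0 -> p %| S`_0.
Proof.
move=> S0; pose e := (size S).+1.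
(* T(v) = D(v)^e S(- p(v) / D(v)), and T = S_0 D^e modulo p. *)
pose T := \sum_(i < e) S`_i * (- p) ^+ i * D ^+ (e - i).
have T0 : T = 0.
  apply/eqP; rewrite -evV_eq0; apply/eqP.
  rewrite -(mulr0 (evV D ^+ e)) -S0 (@horner_coef_wide _ e) ?(leqW (size_poly _ _)) //.
  rewrite big_distrr rmorph_sum /=; apply: eq_bigr => i _.
  rewrite coef_map /= !rmorphM !rmorphXn /= rmorphN.
  have -> : evV D ^+ e = evV D ^+ i * evV D ^+ (e - i) by rewrite -exprD subnKC // ltnW.
  rewrite expr_div_n.
  by field; rewrite expf_neq0.
have : p %| S`_0 * D ^+ e.
  move/eqP: T0; rewrite /T big_ord_recl expr0 mulr1 subn0 addr_eq0 => /eqP ->.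
  rewrite dvdpNr; elim/big_rec: _ => [|i r _ p_r]; first exact: dvdp0.
  by rewrite dvdp_add // -mulrA dvdp_mull // exprSr -mulrA dvdp_mull // mulNr dvdpNr dvdp_mulIl.
by rewrite Gauss_dvdpl // coprimep_expr.
Qed.

Lemma dvdp_coef0_of_root R : evVY R = 0 -> p %| R`_0.
Proof.
move=> R0.
(* The norm of R is a polynomial S in Y^n, and y^n = - p(v) / D(v). *)
have zeta_primP : n.-primitive_root zeta%:P by rewrite fmorph_primitive_root.
have [S normR S0] := prod_comp_prim_root R zeta_primP.
have evVY_norm : evVY (\prod_(i < n) (R \Po (zeta%:P ^+ i *: 'X))) = 0.
  rewrite rmorph_prod -(prednK n_gt0) big_ord_recl /=.
  by rewrite expr0 scale1r comp_polyXr R0 mul0r.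
have y_expn : y ^+ n = - evV p / evV D.
  apply: (mulfI evD_neq0); rewrite mulrCA divff // mulr1.
  by apply/eqP; rewrite -addr_eq0 -evVY_kummer_poly kummer_root.
move: evVY_norm; rewrite normR {1}/horner_morph map_comp_poly horner_comp.
rewrite map_polyXn hornerXn y_expn.
move/dvdp_coef0_of_eval_ratio; rewrite S0; apply: contraLR.
by rewrite -!irreducible_poly_coprime //; apply: coprimep_expr.
Qed.

Lemma dvdp_coef_of_root R : evVY R = 0 -> (size R <= n)%N -> forall j, p %| R`_j.
Proof.
move=> R0 szR; elim/ltn_ind => j IH.
(* Once p divides R_0, ..., R_(j-1), dividing R(v, y) by y^j using
   p(v) = - D(v) y^n leaves a relation with constant coefficient R_j. *)
have [le_R_j | lt_j_R] := leqP (size R) j; first by rewrite nth_default ?dvdp0.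
have lt_j_n : (j < n)%N := leq_trans lt_j_R szR.
pose lo := \poly_(i < j) (R`_i %/ p); pose hi := drop_poly j R.
have R_split : R = p%:P * lo + hi * 'X^j.
  rewrite -[LHS](poly_take_drop j); congr (_ + _); apply/polyP => i.
  rewrite coef_take_poly coefCM coef_poly; case: ifP => [lt_i_j|_]; last by rewrite mulr0.
  by rewrite mulrC divpK ?IH.
pose R2 := hi - D%:P * ('X^(n - j) * lo).
have R2_0 : R2`_0 = R`_j.
  by rewrite coefB coefCM coefXnM subn_gt0 lt_j_n mulr0 subr0 coef_drop_poly.
have evVY_R : evVY R = y ^+ j * evVY R2.
  have evp : evV p = - (evV D * (y ^+ j * y ^+ (n - j))).
    by apply/eqP; rewrite -exprD subnKC 1?ltnW // -addr_eq0 addrC -evVY_kummer_poly kummer_root.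
  rewrite R_split /R2 !(rmorphD, rmorphN, rmorphB, rmorphM, rmorphXn) /= !evVY_C.
  by rewrite horner_morphX evp; ring.
rewrite -R2_0; apply: dvdp_coef0_of_root.
by apply/eqP; move: R0; rewrite evVY_R => /eqP; rewrite mulf_eq0 expf_eq0 (negPf y_neq0) andbF.
Qed.

Lemma root_small_eq0 R : evVY R = 0 -> (size R <= n)%N -> R = 0.
Proof.
suff dvdp_pow m : forall R, evVY R = 0 -> (size R <= n)%N -> forall j, p ^+ m %| R`_j.
  move=> R0 szR; apply/polyP => j; rewrite coef0; apply/eqP; apply: contraT => Rj_neq0.
  have p_gt1 : (1 < size p)%N by case: p_irr.
  have lt_m_pow m : (m < size (p ^+ m))%N.
    rewrite -[size _]prednK ?size_poly_gt0 ?expf_neq0 ?p_neq0 // size_exp ltnS.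
    by rewrite leq_pmull // -subn1 subn_gt0.
  have := dvdp_leq Rj_neq0 (dvdp_pow (size R`_j) R R0 szR j).
  by rewrite leqNgt lt_m_pow.
elim: m => [|m IH] {}R R0 szR j; first by rewrite expr0 dvd1p.
pose R1 := \poly_(i < size R) (R`_i %/ p).
have R_eq : R = p%:P * R1.
  apply/polyP => i; rewrite coefCM coef_poly; case: ltnP => lt_i_R.
    by rewrite mulrC divpK // dvdp_coef_of_root.
  by rewrite mulr0 nth_default.
have R1_0 : evVY R1 = 0.
  apply/eqP; move: R0; rewrite R_eq rmorphM /= evVY_C => /eqP.
  by rewrite mulf_eq0 evV_eq0 (negPf p_neq0).
rewrite R_eq coefCM exprS dvdp_mul2l ?p_neq0 // IH //.
by rewrite (leq_trans (size_poly _ _)).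
Qed.

Let size_XnD : size ('X^n * D%:P) = n.+1.
Proof. by rewrite mulrC mul_polyC size_scale ?D_neq0 // size_polyXn. Qed.

Lemma size_kummer_poly : size G = n.+1.
Proof. by rewrite size_polyDl size_XnD // (leq_ltn_trans (size_polyC_leq1 _)) // ltnS n_gt0. Qed.

Lemma lead_coef_kummer_poly : lead_coef G = D.
Proof.
rewrite lead_coefDl ?size_XnD ?(leq_ltn_trans (size_polyC_leq1 _)) ?ltnS ?n_gt0 //.
by rewrite mulrC mul_polyC lead_coefZ lead_coefXn mulr1.
Qed.

Lemma kummer_poly_cancel_XsubC c P Q :
  c \in s -> ('X - c%:P)%:P * P = Q * G -> exists Q', P = Q' * G.
Proof.
move=> c_s PQ.
(* Modulo V - c, G is the nonzero constant p(c), so V - c divides Q. *)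
have pc_neq0 : p.[c] != 0.
  rewrite -/(root p c) -coprimep_XsubC (coprimep_dvdl _ p_coprime_D) //.
  by rewrite dvdp_XsubCl D_split root_prod_XsubC.
have G_at_c : map_poly (horner_eval c) G = (p.[c])%:P.
  rewrite rmorphD rmorphM /= map_polyXn !map_polyC /= !horner_evalE.
  move: (root_prod_XsubC s c); rewrite c_s -D_split => /rootP ->.
  by rewrite polyC0 mulr0 add0r.
have Q_at_c : map_poly (horner_eval c) Q = 0.
  move/(congr1 (map_poly (horner_eval c))): PQ.
  rewrite !rmorphM /= map_polyC /= horner_evalE hornerXsubC subrr polyC0 mul0r G_at_c.
  by move/esym/eqP; rewrite mulf_eq0 polyC_eq0 (negPf pc_neq0) orbF => /eqP.
pose Q' := \poly_(j < size Q) (Q`_j %/ ('X - c%:P)).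
have Q_eq : Q = ('X - c%:P)%:P * Q'.
  apply/polyP => j; rewrite coefCM coef_poly; case: ltnP => lt_j_Q.
    by rewrite mulrC divpK // dvdp_XsubCl /root -horner_evalE -coef_map Q_at_c coef0.
  by rewrite mulr0 nth_default.
exists Q'; apply: (@mulfI _ ('X - c%:P)%:P); first by rewrite polyC_eq0 polyXsubC_eq0.
by rewrite PQ Q_eq mulrA.
Qed.

Lemma kummer_poly_cancel_D m P Q : (D ^+ m)%:P * P = Q * G -> exists Q', P = Q' * G.
Proof.
have cancel_prod t : {subset t <= s} -> forall P Q,
    (\prod_(c <- t) ('X - c%:P))%:P * P = Q * G -> exists Q', P = Q' * G.
  elim: t => [|c t IHt] t_s P' Q'; first by rewrite big_nil mul1r => ->; exists Q'.
  rewrite big_cons polyCM -mulrA => PQ.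
  have [Q'' PQ''] := kummer_poly_cancel_XsubC (t_s c (mem_head c t)) PQ.
  by apply: (IHt _ _ _ PQ'') => d d_t; apply: t_s; rewrite inE d_t orbT.
elim: m P Q => [|m IHm] P Q; first by rewrite expr0 mul1r => ->; exists Q.
by rewrite exprS polyCM -mulrA {1}D_split => /cancel_prod [] // Q' /IHm.
Qed.

Theorem kummer_relations P : evVY P = 0 <-> exists Q, P = Q * G.
Proof.
split=> [P0 | [Q ->]]; last by rewrite rmorphM /= kummer_root mulr0.
have G_neq0 : G != 0 by rewrite -size_poly_gt0 size_kummer_poly.
have := Pdiv.Idomain.divp_eq P G; rewrite lead_coef_kummer_poly -mul_polyC.
have -> : Pdiv.Idomain.modp P G = 0.
  apply: root_small_eq0; last by have := Pdiv.Idomain.ltn_modp P G; rewrite G_neq0 size_kummer_poly.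
  move/(congr1 evVY): (Pdiv.Idomain.divp_eq P G).
  by rewrite -mul_polyC !rmorphD !rmorphM /= P0 kummer_root !mulr0 add0r => /esym.
by rewrite addr0; apply: kummer_poly_cancel_D.
Qed.

End KummerRelations.

Section GeneratedSubfield.

Variable L : fieldType.

Section SubfieldClosed.

Variables (S : L -> Prop) (S_closed : Defs.subfield_closed S).

Lemma subfield_closed1 : S 1. Proof. by case: S_closed. Qed.

Lemma subfield_closedB u w : S u -> S w -> S (u - w).
Proof. by case: S_closed => _ SB _ _; apply: SB. Qed.

Lemma subfield_closedM u w : S u -> S w -> S (u * w).
Proof. by case: S_closed => _ _ SM _; apply: SM. Qed.

Lemma subfield_closedV u : S u -> S u^-1.
Proof. by case: S_closed => _ _ _ SV; apply: SV. Qed.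

Lemma subfield_closedN u : S u -> S (- u).
Proof.
move=> Su; rewrite -sub0r -(subrr 1).
by do 2?apply: subfield_closedB => //; apply: subfield_closed1.
Qed.

Lemma subfield_closedD u w : S u -> S w -> S (u + w).
Proof.
by move=> Su Sw; rewrite -[w]opprK; apply: subfield_closedB => //; apply: subfield_closedN.
Qed.

Lemma subfield_closedX u m : S u -> S (u ^+ m).
Proof.
move=> Su; elim: m => [|m IHm]; first by rewrite expr0; apply: subfield_closed1.
by rewrite exprS; apply: subfield_closedM.
Qed.

Lemma subfield_closed_div u w : S u -> S w -> S (u / w).
Proof. by move=> Su Sw; apply: subfield_closedM => //; apply: subfield_closedV. Qed.

End SubfieldClosed.

Lemma gen_field_closed (A : L -> Prop) : Defs.subfield_closed (gen_field A).
Proof.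
split=> [S SA _ | u w Au Aw S SA AS | u w Au Aw S SA AS | u Au S SA AS].
- exact: subfield_closed1.
- by apply: subfield_closedB; [| apply: Au | apply: Aw].
- by apply: subfield_closedM; [| apply: Au | apply: Aw].
- by apply: subfield_closedV; [| apply: Au].
Qed.

Lemma gen_field_mem (A : L -> Prop) z : A z -> gen_field A z.
Proof. by move=> Az S _; apply. Qed.

Lemma gen_field_sub (A B : L -> Prop) :
  (forall z, A z -> gen_field B z) -> forall z, gen_field A z -> gen_field B z.
Proof. by move=> AB z; apply; [apply: gen_field_closed | apply: AB]. Qed.

End GeneratedSubfield.

Section CarlitzAction.

Variables (k : finFieldType) (L : fieldType) (kappa : {rmorphism k -> L}) (x : L).

Local Notation q := #|k|.
Local Notation phi := (carlitz_phi k x).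
Local Notation act := (carlitz_act kappa x).

Lemma exprD_card (z w : L) : (z + w) ^+ q = z ^+ q + w ^+ q.
Proof.
apply: exprDn_pchar; have [p _ pchar_p] := finPcharP k.
rewrite (card_pprimeChar pchar_p) pnatX pnatE ?(pcharf_prime pchar_p) //.
by rewrite (rmorph_pchar kappa pchar_p).
Qed.

Lemma rmorph_exp_card (c : k) : kappa c ^+ q = kappa c.
Proof. by rewrite -rmorphXn expf_card. Qed.

Lemma carlitz_phi0 : phi 0 = 0.
Proof. by rewrite /carlitz_phi mulr0 addr0 expr0n gtn_eqF // ltnW ?finNzRing_gt1. Qed.

Lemma carlitz_phiD z w : phi (z + w) = phi z + phi w.
Proof. by rewrite /carlitz_phi exprD_card mulrDr addrACA. Qed.

Lemma carlitz_phiZ c z : phi (kappa c * z) = kappa c * phi z.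
Proof. by rewrite /carlitz_phi exprMn rmorph_exp_card mulrDr mulrCA. Qed.

Lemma iter_carlitz_phiD i z w : iter i phi (z + w) = iter i phi z + iter i phi w.
Proof. by elim: i => //= i ->; rewrite carlitz_phiD. Qed.

Lemma iter_carlitz_phiZ i c z : iter i phi (kappa c * z) = kappa c * iter i phi z.
Proof. by elim: i => //= i ->; rewrite carlitz_phiZ. Qed.

Lemma carlitz_actD g z w : act g (z + w) = act g z + act g w.
Proof.
by rewrite /carlitz_act -big_split; apply: eq_bigr => i _; rewrite iter_carlitz_phiD mulrDr.
Qed.

Lemma carlitz_actZ g c z : act g (kappa c * z) = kappa c * act g z.
Proof.
by rewrite /carlitz_act mulr_sumr; apply: eq_bigr => i _; rewrite iter_carlitz_phiZ mulrCA.
Qed.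

Lemma carlitz_act_phi g z : act g (phi z) = phi (act g z).
Proof.
rewrite /carlitz_act (big_morph phi carlitz_phiD carlitz_phi0); apply: eq_bigr => i _.
by rewrite carlitz_phiZ -iterS iterSr.
Qed.

Lemma carlitz_act_eigen g e z : phi z = kappa e * z -> act g z = kappa g.[e] * z.
Proof.
move=> phi_z; have iter_z i : iter i phi z = kappa (e ^+ i) * z.
  elim: i => [|i /= ->]; first by rewrite expr0 rmorph1 mul1r.
  by rewrite carlitz_phiZ phi_z exprSr rmorphM mulrA.
rewrite /carlitz_act horner_coef rmorph_sum mulr_suml; apply: eq_bigr => i _.
by rewrite iter_z rmorphM mulrA.
Qed.

Lemma carlitz_torsion_span g lam c d : carlitz_torsion kappa x g lam ->
  carlitz_torsion kappa x g (kappa c * lam + kappa d * phi lam).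
Proof.
rewrite /carlitz_torsion carlitz_actD !carlitz_actZ carlitz_act_phi => ->.
by rewrite carlitz_phi0 !mulr0 addr0.
Qed.

Variables (a b : k).
Local Notation M := ('X^2 + a *: 'X + b%:P : {poly k}).

Lemma carlitz_act_quad z :
  act M z = z ^+ (q * q) + (x ^+ q + x + kappa a) * z ^+ q + (x ^+ 2 + kappa a * x + kappa b) * z.
Proof.
have size_M : size M = 3 by rewrite -['X^2]scale1r size_quad ?oner_neq0.
rewrite /carlitz_act size_M !big_ord_recl big_ord0 /= !coefD !coefXn !coefZ !coefX !coefC /=.
rewrite /carlitz_phi /bump /= exprD_card exprMn -exprM.
by rewrite !(mulr0, mulr1, addr0, add0r) rmorph1; ring.
Qed.

Hypothesis M_no_root : forall c, ~~ root M c.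

Lemma carlitz_quad_free lam c d : lam != 0 -> carlitz_torsion kappa x M lam ->
  kappa c * lam + kappa d * phi lam = 0 -> c = 0 /\ d = 0.
Proof.
move=> lam_neq0 lam_tors cd0; have [d0 | d_neq0] := eqVneq d 0.
  split=> //; apply/eqP; move: cd0; rewrite d0 rmorph0 mul0r addr0 => /eqP.
  by rewrite mulf_eq0 (negPf lam_neq0) orbF fmorph_eq0.
have kd_neq0 : kappa d != 0 by rewrite fmorph_eq0.
have phi_lam : phi lam = kappa (- c / d) * lam.
  have : kappa d * phi lam = - (kappa c * lam) by apply/eqP; rewrite -addr_eq0 addrC cd0.
  by move=> kd_phi; apply: (mulfI kd_neq0); rewrite kd_phi fmorph_div rmorphN; field.
exfalso; move: lam_tors; rewrite /carlitz_torsion (carlitz_act_eigen _ phi_lam) => /eqP.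
by rewrite mulf_eq0 (negPf lam_neq0) orbF fmorph_eq0 -/(root M _) (negPf (M_no_root _)).
Qed.

Lemma carlitz_torsion_quadP lam : lam != 0 -> carlitz_torsion kappa x M lam ->
  forall z, carlitz_torsion kappa x M z <-> exists c d, z = kappa c * lam + kappa d * phi lam.
Proof.
move=> lam_neq0 lam_tors z; split=> [z_tors | [c [d ->]]]; last exact: carlitz_torsion_span.
pose f (cd : k * k) := kappa cd.1 * lam + kappa cd.2 * phi lam.
have f_inj : injective f.
  move=> [c d] [c' d'] eq_f.
  have /(carlitz_quad_free lam_neq0 lam_tors) [/eqP + /eqP] :
      kappa (c - c') * lam + kappa (d - d') * phi lam = 0.
    by rewrite !rmorphB !mulrBl addrACA -opprD; apply/eqP; rewrite subr_eq0; apply/eqP.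
  by rewrite !subr_eq0 => /eqP -> /eqP ->.
have /mapP [[c d] _ ->] : z \in [seq f cd | cd <- enum {: k * k}]; last by exists c, d.
(* Otherwise the torsion polynomial of degree q^2 would have q^2 + 1 roots. *)
apply: contraT => z_notin.
pose P : {poly L} := 'X^(q * q) + (x ^+ q + x + kappa a)%:P * 'X^q
                     + (x ^+ 2 + kappa a * x + kappa b)%:P * 'X.
have root_P t : root P t = (act M t == 0).
  by rewrite /root !hornerE carlitz_act_quad.
have q_gt1 : (1 < q)%N := finNzRing_gt1 k.
have size_P : size P = (q * q).+1.
  rewrite /P -addrA size_polyDl size_polyXn // (leq_ltn_trans (size_polyD _ _)) // gtn_max.
  rewrite !mul_polyC; apply/andP; split; apply: leq_ltn_trans (size_scale_leq _ _) _.
    by rewrite size_polyXn ltnS ltn_Pmull // ltnW.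
  by rewrite size_polyX ltnS (leq_trans q_gt1) // leq_pmull // ltnW.
have := @max_poly_roots _ P (z :: [seq f cd | cd <- enum {: k * k}]).
rewrite -size_poly_gt0 size_P /= root_P z_tors eqxx z_notin (map_inj_uniq f_inj) enum_uniq.
rewrite size_map -cardE card_prod ltnn; apply=> //; apply/allP => _ /mapP [cd _ ->].
by rewrite root_P; apply/eqP/carlitz_torsion_span.
Qed.

End CarlitzAction.

Lemma exists_carlitz_torsion_quad (k : finFieldType) (L : closedFieldType)
    (kappa : {rmorphism k -> L}) (x : L) (a b : k) :
  x ^+ 2 + kappa a * x + kappa b != 0 ->
  exists2 lam, lam != 0 & carlitz_torsion kappa x ('X^2 + a *: 'X + b%:P) lam.
Proof.
move=> m_neq0; set q := #|k|; have q_gt1 : (1 < q)%N := finNzRing_gt1 k.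
have q_gt0 : (0 < q)%N := ltnW q_gt1.
have q1_gt0 : (0 < q.-1)%N by rewrite -subn1 subn_gt0.
have qq1_gt_q1 : (q.-1 < (q * q).-1)%N.
  have q_lt_qq : (q < q * q)%N := ltn_Pmull q_gt1 q_gt0.
  by rewrite -!subn1 ltn_sub2r // (ltn_trans q_gt1).
have qq1_gt0 : (0 < (q * q).-1)%N := ltn_trans q1_gt0 qq1_gt_q1.
pose P : {poly L} := 'X^((q * q).-1) + (x ^+ q + x + kappa a)%:P * 'X^(q.-1)
                     + (x ^+ 2 + kappa a * x + kappa b)%:P.
have size_P : size P = (q * q).-1.+1.
  rewrite /P -addrA size_polyDl size_polyXn //.
  rewrite (leq_ltn_trans (size_polyD _ _)) // gtn_max.
  rewrite mul_polyC; apply/andP; split.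
    apply: leq_ltn_trans (size_scale_leq _ _) _; rewrite size_polyXn ltnS.
    exact: qq1_gt_q1.
  by apply: leq_ltn_trans (size_polyC_leq1 _) _; rewrite ltnS.
have [lam /rootP P_lam] : exists lam, root P lam.
  by apply/closed_rootP; rewrite size_P eqSS -lt0n qq1_gt0.
exists lam.
  apply: contra_eq_neq P_lam => ->.
  rewrite !hornerD hornerCM !hornerXn hornerC !expr0n (negPf (lt0n_neq0 q1_gt0)).
  by rewrite (negPf (lt0n_neq0 qq1_gt0)) mulr0 !add0r.
have lam_qq : lam ^+ (q * q) = lam ^+ (q * q).-1 * lam.
  by rewrite -exprSr prednK // muln_gt0 q_gt0.
have lam_q : lam ^+ q = lam ^+ q.-1 * lam by rewrite -exprSr prednK.
rewrite /carlitz_torsion carlitz_act_quad lam_qq lam_q.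
transitivity (P.[lam] * lam); last by rewrite P_lam mul0r.
by rewrite !hornerD hornerCM !hornerXn hornerC; ring.
Qed.

Definition quad_twist (k : fieldType) (a b gamma : k) : {poly k} :=
  gamma *: 'X^2 + a *: 'X + (b / gamma)%:P.

Section CyclotomicGenerators.

Variables (k : finFieldType) (L : fieldType) (kappa : {rmorphism k -> L}) (x : L).
Variables (a b gamma : k).
Hypothesis x_transcendental : transcendental_over kappa x.
Hypothesis M_irr : irreducible_poly ('X^2 + a *: 'X + b%:P : {poly k}).
Hypothesis gamma_neq0 : gamma != 0.

Local Notation q := #|k|.
Local Notation M := ('X^2 + a *: 'X + b%:P : {poly k}).

Lemma quad_no_root c : ~~ root M c.
Proof. by apply: irredp_no_root; rewrite // -['X^2]scale1r size_quad ?oner_neq0. Qed.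

Lemma quad_at_transcendental_neq0 : x ^+ 2 + kappa a * x + kappa b != 0.
Proof.
have := x_transcendental (irredp_neq0 M_irr).
by rewrite !rmorphD /= map_polyXn map_polyZ map_polyX map_polyC /= !hornerE.
Qed.

Lemma horner_quad_twist c : (quad_twist a b gamma).[c] = M.[gamma * c] / gamma.
Proof. by rewrite !(hornerD, hornerZ, hornerXn, hornerX, hornerC); field. Qed.

Lemma quad_twist_irreducible : irreducible_poly (quad_twist a b gamma).
Proof.
apply: cubic_irreducible => [|c]; first by rewrite size_quad.
by rewrite rootE horner_quad_twist mulf_eq0 invr_eq0 (negPf gamma_neq0) orbF; exact: quad_no_root.
Qed.

Lemma quad_twist_coprime : coprimep (quad_twist a b gamma) ('X^q - 'X).
Proof.
rewrite finField_genPoly; elim/big_rec: _ => [|c r _ cop_r]; first exact: coprimep1.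
rewrite coprimepMr cop_r andbT coprimep_XsubC rootE horner_quad_twist.
by rewrite mulf_eq0 invr_eq0 (negPf gamma_neq0) orbF quad_no_root.
Qed.

Variable lam : L.
Hypothesis lam_neq0 : lam != 0.
Hypothesis lam_torsion : carlitz_torsion kappa x M lam.

Let u := lam ^+ q.-1.
Let w := u + x.
Let v := w / kappa gamma.

Lemma kummer_generator_relation : x * (w ^+ q - w) = w ^+ q * w + kappa a * w + kappa b.
Proof.
have q_gt0 : (0 < q)%N := ltnW (finNzRing_gt1 k).
have lam_q : lam ^+ q = u * lam by rewrite -exprSr prednK.
have lam_qq : lam ^+ (q * q) = u ^+ q * u * lam by rewrite exprM lam_q exprMn lam_q mulrA.
have u_rel : u ^+ q * u + (x ^+ q + x + kappa a) * u + (x ^+ 2 + kappa a * x + kappa b) = 0.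
  apply: (mulIf lam_neq0); rewrite mul0r -lam_torsion /carlitz_torsion carlitz_act_quad.
  by rewrite lam_qq lam_q; ring.
transitivity (x * (w ^+ q - w) + 0); first by rewrite addr0.
by rewrite -u_rel /w (exprD_card kappa); ring.
Qed.

Lemma eval2_defining_poly : eval2 kappa v lam (defining_poly a b gamma) = 0.
Proof.
have kg_neq0 : kappa gamma != 0 by rewrite fmorph_eq0.
have u_eq : lam ^+ q.-1 = w - x by rewrite /w /u addrK.
rewrite [LHS](evVY_kummer_poly kappa v lam q.-1 ('X^q - 'X) (quad_twist a b gamma)).
rewrite /horner_morph rmorphB !rmorphD /= !map_polyZ !map_polyXn map_polyX !map_polyC /=.
rewrite !(hornerD, hornerN, hornerZ, hornerXn, hornerX, hornerC) fmorph_div.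
rewrite /v expr_div_n rmorph_exp_card.
transitivity ((w ^+ q * w + kappa a * w + kappa b - x * (w ^+ q - w)) / kappa gamma).
  by rewrite u_eq; field.
by rewrite kummer_generator_relation subrr mul0r.
Qed.

Lemma v_transcendental : transcendental_over kappa v.
Proof.
have alg_exp z m : algebraicOver kappa z -> algebraicOver kappa (z ^+ m).
  move=> alg_z; elim: m => [|m IHm]; first by rewrite expr0; apply: algebraic1.
  by rewrite exprS; apply: algebraic_mul.
move=> r r_neq0; apply/negP => /eqP rv0.
have alg_w : algebraicOver kappa w.
  have -> : w = v * kappa gamma by rewrite /v divfK // fmorph_eq0.
  by apply: algebraic_mul; [exists r => //; apply/rootP | apply: algebraic_id].
have [w_fixed | w_moved] := eqVneq (w ^+ q) w.
  have [c w_c] := expcard_fixed_image kappa w_fixed.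
  have := kummer_generator_relation; rewrite w_fixed subrr mulr0 w_c => /esym/eqP.
  apply/negP; move: (quad_no_root c); apply: contra.
  rewrite rootE !(hornerD, hornerZ, hornerXn, hornerX, hornerC) -(fmorph_eq0 kappa).
  by rewrite !rmorphD !rmorphM.
have x_eq : x = (w ^+ q * w + kappa a * w + kappa b) / (w ^+ q - w).
  by rewrite -kummer_generator_relation mulfK // subr_eq0.
have [p p_neq0 px0] : algebraicOver kappa x.
  rewrite x_eq; apply: algebraic_div; first do ?apply: algebraic_add.
  - by apply: algebraic_mul => //; apply: alg_exp.
  - by apply: algebraic_mul => //; apply: algebraic_id.
  - exact: algebraic_id.
  - by apply: algebraic_sub => //; apply: alg_exp.
by have := x_transcendental p_neq0; rewrite -rootE px0.
Qed.

Lemma cyclotomic_ff_generators z :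
  cyclotomic_ff kappa x M z <-> gen_field (fun t => [\/ const_field kappa t, t = v | t = lam]) z.
Proof.
rewrite /cyclotomic_ff.
set A := fun t => [\/ _, _ | _]; set B := fun t => [\/ _, t = v | _].
have A_closed := gen_field_closed A; have B_closed := gen_field_closed B.
have A_const c : gen_field A (kappa c) by apply: gen_field_mem; apply: Or31; exists c.
have B_const c : gen_field B (kappa c) by apply: gen_field_mem; apply: Or31; exists c.
have B_lam : gen_field B lam by apply: gen_field_mem; apply: Or33.
have B_x : gen_field B x.
  have -> : x = kappa gamma * v - lam ^+ q.-1.
    by rewrite mulrC divfK ?fmorph_eq0 // /w /u addrC addKr.
  apply: (subfield_closedB B_closed); last exact: (subfield_closedX B_closed).
  by apply: (subfield_closedM B_closed) => //; apply: gen_field_mem; apply: Or32.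
split; apply: gen_field_sub => t.
- case=> [t_const | -> // | /(carlitz_torsion_quadP quad_no_root lam_neq0 lam_torsion)].
    by apply: gen_field_mem; apply: Or31.
  case=> c [d ->]; rewrite /carlitz_phi.
  apply: (subfield_closedD B_closed); apply: (subfield_closedM B_closed) => //.
  apply: (subfield_closedD B_closed); first exact: (subfield_closedX B_closed).
  exact: (subfield_closedM B_closed).
- have A_x : gen_field A x by apply: gen_field_mem; apply: Or32.
  have A_lam : gen_field A lam by apply: gen_field_mem; apply: Or33.
  case=> [t_const | -> | ->] //; first by apply: gen_field_mem; apply: Or31.
  apply: (subfield_closed_div A_closed) => //.
  by apply: (subfield_closedD A_closed) => //; apply: (subfield_closedX A_closed).
Qed.

End CyclotomicGenerators.

Unset Implicit Arguments.

Theorem proposition3p1 (k : finFieldType) (L : closedFieldType)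
  (kappa : {rmorphism k -> L}) (x : L)
  (hx : transcendental_over kappa x)
  (a b : k) (hf : irreducible_poly ('X^2 + a *: 'X + b%:P : {poly k}))
  (gamma : k) (hgamma : gamma != 0) :
  exists v y : L,
    (forall z : L,
       cyclotomic_ff kappa x ('X^2 + a *: 'X + b%:P) z <->
       gen_field (fun w => [\/ const_field kappa w, w = v | w = y]) z) /\
    (forall P : {poly {poly k}},
       eval2 kappa v y P = 0 <->
       exists Q : {poly {poly k}}, P = Q * defining_poly a b gamma).
Proof.
have [lam lam_neq0 lam_torsion] :=
  exists_carlitz_torsion_quad (quad_at_transcendental_neq0 hx hf).
exists ((lam ^+ #|k|.-1 + x) / kappa gamma), lam; split.
  exact: cyclotomic_ff_generators.
have [zeta zeta_prim] := finField_prim_root k.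
(* [defining_poly a b gamma] unfolds to
   [kummer_poly #|k|.-1 ('X^#|k| - 'X) (quad_twist a b gamma)]. *)
move=> P; exact: (kummer_relations (v_transcendental hx hf hgamma lam_neq0 lam_torsion)
  zeta_prim (quad_twist_irreducible hf hgamma) (finField_genPoly k)
  (quad_twist_coprime hf hgamma) (eval2_defining_poly hgamma lam_neq0 lam_torsion) P).
Qed.
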